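(* Let $-1<\nu\leq 0$ and let $j_{\nu,1}$ denote the first positive zero of the Bessel function $J_\nu$ of the first kind. Let $p,q\in\mathbb{R}$. Then the inequalities $$(1-p)\mathcal{J}_{\nu+1}(x)+p\frac{\mathcal{J}_{\nu+1}(x)}{\mathcal{J}_{\nu}(x)}>1>(1-q)\mathcal{J}_{\nu+1}(x)+q\frac{\mathcal{J}_{\nu+1}(x)}{\mathcal{J}_{\nu}(x)}$$ hold for all $x\in(0,j_{\nu,1})$ if and only if $p\geq\frac{\nu+1}{\nu+2}$ and $q\leq 0$.
   Context: For $\mu>-1$, $J_\mu(x)=\sum_{n\geq0}\frac{(-1)^n (x/2)^{\mu+2n}}{n!\,\Gamma(\mu+n+1)}$ is the Bessel function of the first kind, and $\mathcal{J}_\mu:\mathbb{R}\to\mathbb{R}$ is the normalized Bessel function $$\mathcal{J}_{\mu}(x)=2^{\mu}\Gamma(\mu+1)x^{-\mu}J_{\mu}(x)=\sum_{n\geq0}\frac{(-1/4)^n}{(\mu+1)_n\, n!}x^{2n},$$ where $(\mu+1)_n=\Gamma(\mu+n+1)/\Gamma(\mu+1)$ is the Pochhammer symbol. In particular $\mathcal{J}_{-1/2}(x)=\cos x$, $\mathcal{J}_{1/2}(x)=\frac{\sin x}{x}$, and $j_{-1/2,1}=\pi/2$. *)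

From Stdlib Require Import Reals ClassicalEpsilon Arith Factorial.
Open Scope R_scope.

Fixpoint poch (a : R) (n : nat) : R :=
  match n with
  | O => 1
  | S k => poch a k * (a + INR k)
  end.

Definition nbessel_term (mu x : R) (n : nat) : R :=
  (-1/4) ^ n / (poch (mu + 1) n * INR (fact n)) * x ^ (2 * n).

(* Normalized Bessel function: the sum of the (everywhere convergent) series. *)
Definition nbessel (mu x : R) : R :=
  epsilon (inhabits 0) (fun l => infinite_sum (nbessel_term mu x) l).

From Stdlib Require Import Reals Lra Lia ClassicalEpsilon Factorial.
From Coquelicot Require Import Coquelicot.
Open Scope R_scope.

(* Write b = J_nu(x), a = J_(nu+1)(x) and r = (nu+1)/(nu+2).  On (0, j) we have 0 < b < a < 1,
   and the mixture (1-s) a + s a/b exceeds 1 exactly when s exceeds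
   R(x) = b (1-a) / (a (1-b)).  So the theorem says that R takes values in (0, r) with infimum 0
   and supremum r.  The infimum is the value R(j) = 0 at the zero of J_nu, by continuity.  The
   bound R < r is the growth of r (1/J_nu - 1) - (1/J_(nu+1) - 1), which follows from b < a and
   the Turan-type inequality J_nu J_(nu+2) <= J_(nu+1)^2 (valid for nu <= 0); and R -> r as
   x -> 0 because 1 - J_mu(x) ~ x^2/(4(mu+1)).  Everything about J comes from its power series in
   x^2, the derivative J_mu' = -x/(2(mu+1)) J_(mu+1) and the recurrence
   J_mu = J_(mu+1) - x^2/(4(mu+1)(mu+2)) J_(mu+2). *)

Definition bessel_coef (m : R) (n : nat) : R :=
  (-1/4) ^ n / (poch (m + 1) n * INR (fact n)).

Lemma poch_pos a n : 0 < a -> 0 < poch a n.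
Proof.
  intros Ha; induction n as [|n IH]; simpl; [lra|].
  apply Rmult_lt_0_compat; [exact IH|]. pose proof (pos_INR n); lra.
Qed.

Lemma poch_succ a n : poch a (S n) = a * poch (a + 1) n.
Proof.
  induction n as [|n IH]; [simpl; ring|].
  change (poch a (S (S n))) with (poch a (S n) * (a + INR (S n))).
  rewrite IH; cbn [poch]; rewrite S_INR; ring.
Qed.

Lemma bessel_coef_neq0 m n : -1 < m -> bessel_coef m n <> 0.
Proof.
  intros Hm; unfold bessel_coef.
  pose proof (poch_pos (m + 1) n ltac:(lra)); pose proof (INR_fact_lt_0 n).
  apply Rmult_integral_contrapositive; split.
  - apply pow_nonzero; lra.
  - apply Rinv_neq_0_compat; nra.
Qed.

Lemma bessel_coef_S m n : -1 < m ->
  bessel_coef m (S n) = - bessel_coef m n / (4 * ((m + 1 + INR n) * (INR n + 1))).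
Proof.
  intros Hm; unfold bessel_coef; cbn [poch pow].
  rewrite fact_simpl, mult_INR, S_INR.
  pose proof (poch_pos (m + 1) n ltac:(lra)); pose proof (INR_fact_lt_0 n).
  pose proof (pos_INR n).
  field; repeat split; lra.
Qed.

Lemma CV_radius_bessel_coef m : -1 < m -> CV_radius (bessel_coef m) = p_infty.
Proof.
  intros Hm; apply CV_radius_infinite_DAlembert; [intro n; exact (bessel_coef_neq0 m n Hm)|].
  apply is_lim_seq_le_le with (u := fun _ => 0)
    (w := fun n => / (4 * (m + 1)) * / INR (S n)).
  - intro n; rewrite bessel_coef_S, S_INR by exact Hm.
    pose proof (bessel_coef_neq0 m n Hm); pose proof (pos_INR n).
    assert (Hd : 0 < 4 * ((m + 1 + INR n) * (INR n + 1))) by nra.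
    replace (- bessel_coef m n / (4 * ((m + 1 + INR n) * (INR n + 1))) / bessel_coef m n)
      with (- / (4 * ((m + 1 + INR n) * (INR n + 1)))) by (field; lra).
    rewrite Rabs_Ropp, Rabs_pos_eq by (left; apply Rinv_0_lt_compat; exact Hd).
    split; [left; apply Rinv_0_lt_compat; exact Hd|].
    rewrite <- Rinv_mult; apply Rinv_le_contravar; nra.
  - apply is_lim_seq_const.
  - replace (Finite 0) with (Rbar_mult (/ (4 * (m + 1))) (Rbar_inv p_infty))
      by (simpl; f_equal; ring).
    apply is_lim_seq_scal_l, (is_lim_seq_incr_1 (fun n => / INR n)).
    apply is_lim_seq_inv; [apply is_lim_seq_INR | discriminate].
Qed.

Lemma ex_pseries_bessel_coef m y : -1 < m -> ex_pseries (bessel_coef m) y.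
Proof.
  intros Hm; apply CV_radius_inside; rewrite CV_radius_bessel_coef by exact Hm; exact I.
Qed.

Lemma nbessel_PSeries m x : -1 < m -> nbessel m x = PSeries (bessel_coef m) (x ^ 2).
Proof.
  intros Hm.
  assert (Hsum : infinite_sum (nbessel_term m x) (PSeries (bessel_coef m) (x ^ 2))).
  { apply is_series_Reals; eapply is_series_ext;
      [|exact (PSeries_correct _ _ (ex_pseries_bessel_coef m (x ^ 2) Hm))].
    intro n; unfold nbessel_term; rewrite pow_n_pow, pow_mult; apply Rmult_comm. }
  apply uniqueness_sum with (nbessel_term m x); [|exact Hsum].
  unfold nbessel; apply epsilon_spec; exists (PSeries (bessel_coef m) (x ^ 2)); exact Hsum.
Qed.

Lemma nbessel_0 m : -1 < m -> nbessel m 0 = 1.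
Proof.
  intros Hm; rewrite nbessel_PSeries, pow_i, PSeries_0 by (lra || lia).
  unfold bessel_coef; simpl; field.
Qed.

Lemma PS_derive_bessel_coef m n : -1 < m ->
  PS_derive (bessel_coef m) n = - / (4 * (m + 1)) * bessel_coef (m + 1) n.
Proof.
  intros Hm; unfold PS_derive, bessel_coef.
  rewrite poch_succ, fact_simpl, mult_INR, S_INR.
  pose proof (poch_pos (m + 1 + 1) n ltac:(lra)); pose proof (INR_fact_lt_0 n).
  pose proof (pos_INR n).
  simpl pow; field; repeat split; lra.
Qed.

Lemma is_derive_nbessel m x : -1 < m ->
  is_derive (nbessel m) x (- x / (2 * (m + 1)) * nbessel (m + 1) x).
Proof.
  intros Hm.
  apply is_derive_ext with (fun t => PSeries (bessel_coef m) (t ^ 2));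
    [intro t; rewrite nbessel_PSeries by exact Hm; reflexivity|].
  rewrite (nbessel_PSeries (m + 1)) by lra.
  replace (- x / (2 * (m + 1)) * PSeries (bessel_coef (m + 1)) (x ^ 2))
    with (scal (2 * x) (PSeries (PS_derive (bessel_coef m)) (x ^ 2))).
  - apply (is_derive_comp (PSeries (bessel_coef m)) (fun t => t ^ 2)).
    + apply is_derive_PSeries; rewrite CV_radius_bessel_coef by exact Hm; exact I.
    + auto_derive; [exact I | ring].
  - rewrite (PSeries_ext _ (PS_scal (- / (4 * (m + 1))) (bessel_coef (m + 1)))), PSeries_scal.
    + unfold scal; simpl; unfold mult; simpl; field; lra.
    + intro n; apply PS_derive_bessel_coef, Hm.
Qed.

Lemma nbessel_recurrence m x : -1 < m ->
  nbessel m x = nbessel (m + 1) x - x ^ 2 / (4 * (m + 1) * (m + 2)) * nbessel (m + 2) x.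
Proof.
  intros Hm; rewrite !nbessel_PSeries by lra.
  set (k := - / (4 * (m + 1) * (m + 2))).
  transitivity (PSeries (PS_plus (bessel_coef (m + 1))
                                 (PS_scal k (PS_incr_1 (bessel_coef (m + 2))))) (x ^ 2)).
  - apply PSeries_ext; intros [|n];
      unfold PS_plus, PS_scal, PS_incr_1, plus, scal, zero, mult; cbn -[pow poch fact INR];
      unfold bessel_coef, k.
    + simpl; field; lra.
    + replace (m + 2) with (m + 1 + 1) by ring.
      set (P := poch (m + 1 + 1) n).
      assert (HP : 0 < P) by (apply poch_pos; lra).
      assert (E : poch (m + 1 + 1 + 1) n = P * (m + 1 + 1 + INR n) / (m + 1 + 1)).
      { change (P * (m + 1 + 1 + INR n)) with (poch (m + 1 + 1) (S n)).
        rewrite poch_succ; field; lra. }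
      rewrite E, poch_succ; change (poch (m + 1 + 1) (S n)) with (P * (m + 1 + 1 + INR n)).
      rewrite fact_simpl, mult_INR, S_INR.
      pose proof (INR_fact_lt_0 n); pose proof (pos_INR n).
      fold P; simpl pow; field; repeat split; lra.
  - rewrite PSeries_plus, PSeries_scal, PSeries_incr_1.
    + unfold k; simpl; field; lra.
    + apply ex_pseries_bessel_coef; lra.
    + apply ex_pseries_scal; [apply Rmult_comm|].
      apply ex_pseries_incr_1, ex_pseries_bessel_coef; lra.
Qed.

Lemma ex_derive_nbessel m x : -1 < m -> ex_derive (nbessel m) x.
Proof. intros Hm; eexists; apply is_derive_nbessel, Hm. Qed.

Lemma Derive_nbessel m x : -1 < m ->
  Derive (nbessel m) x = - x / (2 * (m + 1)) * nbessel (m + 1) x.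
Proof. intros Hm; apply is_derive_unique, is_derive_nbessel, Hm. Qed.

Lemma continuity_pt_nbessel m x : -1 < m -> continuity_pt (nbessel m) x.
Proof.
  intros Hm; apply continuity_pt_filterlim, (ex_derive_continuous (nbessel m)).
  apply ex_derive_nbessel, Hm.
Qed.

Lemma increasing_of_derive_pos f f' a b : a < b ->
  (forall c, a <= c <= b -> is_derive f c (f' c)) ->
  (forall c, a < c < b -> 0 < f' c) -> f a < f b.
Proof.
  intros Hab Hd Hpos.
  destruct (MVT_cor2 f f' a b Hab) as [c [Hc Hcab]];
    [intros c Hc; apply is_derive_Reals, Hd, Hc|].
  pose proof (Hpos c Hcab); nra.
Qed.

Lemma nondecreasing_of_derive_nonneg f f' a b : a < b ->
  (forall c, a <= c <= b -> is_derive f c (f' c)) ->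
  (forall c, a < c < b -> 0 <= f' c) -> f a <= f b.
Proof.
  intros Hab Hd Hpos.
  destruct (MVT_cor2 f f' a b Hab) as [c [Hc Hcab]];
    [intros c Hc; apply is_derive_Reals, Hd, Hc|].
  pose proof (Hpos c Hcab); nra.
Qed.

Lemma continuity_pt_gt_near f x0 l : continuity_pt f x0 -> l < f x0 ->
  exists d, 0 < d /\ forall x, Rabs (x - x0) < d -> l < f x.
Proof.
  intros Hc Hl; destruct (Hc (f x0 - l)) as [d [Hd Hnear]]; [lra|].
  exists d; split; [exact Hd|]; intros x Hx.
  destruct (Req_dec x x0) as [->|Hne]; [exact Hl|].
  assert (Hfx : Rabs (f x - f x0) < f x0 - l) by (apply Hnear; repeat split; auto).
  apply Rabs_def2 in Hfx; lra.
Qed.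

Lemma continuity_pt_lt_near f x0 l : continuity_pt f x0 -> f x0 < l ->
  exists d, 0 < d /\ forall x, Rabs (x - x0) < d -> f x < l.
Proof.
  intros Hc Hl.
  destruct (continuity_pt_gt_near (- f)%F x0 (- l)) as [d [Hd Hnear]];
    [apply continuity_pt_opp, Hc | unfold opp_fct; lra |].
  exists d; split; [exact Hd|]; intros x Hx; specialize (Hnear x Hx); unfold opp_fct in Hnear; lra.
Qed.

Lemma nbessel_pos_of_neq0 m z : -1 < m ->
  (forall x, 0 < x < z -> nbessel m x <> 0) -> forall x, 0 < x < z -> 0 < nbessel m x.
Proof.
  intros Hm Hneq x Hx.
  destruct (Rlt_le_dec 0 (nbessel m x)) as [|Hle]; [assumption|exfalso].
  assert (Hneg : nbessel m x < 0) by (destruct Hle; [assumption | exfalso; now apply (Hneq x)]).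
  destruct (IVT (fun t => - nbessel m t) 0 x) as [y [Hy Hy0]].
  - intro t; apply (continuity_pt_opp (nbessel m)), continuity_pt_nbessel, Hm.
  - lra.
  - rewrite nbessel_0 by exact Hm; lra.
  - lra.
  - assert (y <> 0) by (intros ->; rewrite nbessel_0 in Hy0 by exact Hm; lra).
    apply (Hneq y); lra.
Qed.

(* The integrating factor: [(x^(2m+2) J_(m+1))' = 2(m+1) x^(2m+1) J_m].  The comparison starts at
   a small [x0 > 0] where [J_(m+1) > 0], because [Rpower 0 _ = 1] is a junk value. *)
Lemma nbessel_succ_pos m z : -1 < m ->
  (forall x, 0 < x < z -> 0 < nbessel m x) -> forall y, 0 < y <= z -> 0 < nbessel (m + 1) y.
Proof.
  intros Hm Hpos y Hy.
  destruct (continuity_pt_gt_near (nbessel (m + 1)) 0 0) as [d [Hd Hnear]];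
    [apply continuity_pt_nbessel; lra | rewrite nbessel_0; lra |].
  set (x0 := Rmin d y / 2).
  assert (Hx0 : 0 < x0 < y /\ x0 < d).
  { unfold x0; pose proof (Rmin_l d y); pose proof (Rmin_r d y).
    pose proof (Rmin_glb_lt d y 0 Hd (proj1 Hy)); lra. }
  assert (Hphi : Rpower x0 (2 * m + 2) * nbessel (m + 1) x0
                 < Rpower y (2 * m + 2) * nbessel (m + 1) y).
  { apply (increasing_of_derive_pos (fun t => Rpower t (2 * m + 2) * nbessel (m + 1) t)
      (fun c => Rpower c (2 * m + 1) * (2 * (m + 1)) * nbessel m c)); [lra| |].
    - intros c Hc.
      replace (Rpower c (2 * m + 1) * (2 * (m + 1)) * nbessel m c) with
        ((2 * m + 2) * Rpower c (2 * m + 2 - 1) * nbessel (m + 1) c +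
         Rpower c (2 * m + 2) * (- c / (2 * (m + 1 + 1)) * nbessel (m + 1 + 1) c)).
      + apply is_derive_Reals, (derivable_pt_lim_mult (fun t => Rpower t (2 * m + 2)));
          [apply derivable_pt_lim_power; lra | apply is_derive_Reals, is_derive_nbessel; lra].
      + assert (E : Rpower c (2 * m + 2) = Rpower c (2 * m + 1) * c).
        { replace (2 * m + 2) with (2 * m + 1 + 1) by ring.
          rewrite Rpower_plus, Rpower_1 by lra; reflexivity. }
        replace (2 * m + 2 - 1) with (2 * m + 1) by ring.
        rewrite E, (nbessel_recurrence m c Hm).
        replace (m + 1 + 1) with (m + 2) by ring; field; lra.
    - intros c Hc; apply Rmult_lt_0_compat; [|apply Hpos; lra].
      apply Rmult_lt_0_compat; [apply exp_pos | lra]. }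
  assert (0 < nbessel (m + 1) x0) by (apply Hnear; rewrite Rminus_0_r, Rabs_pos_eq; lra).
  pose proof (exp_pos ((2 * m + 2) * ln x0)); pose proof (exp_pos ((2 * m + 2) * ln y)).
  unfold Rpower in Hphi; nra.
Qed.

Lemma nbessel_lt_1 m z : -1 < m ->
  (forall x, 0 < x < z -> 0 < nbessel (m + 1) x) -> forall x, 0 < x <= z -> nbessel m x < 1.
Proof.
  intros Hm Hpos x Hx; rewrite <- (nbessel_0 m Hm).
  apply Ropp_lt_cancel, (increasing_of_derive_pos (fun t => - nbessel m t)
    (fun c => c / (2 * (m + 1)) * nbessel (m + 1) c)); [lra| |].
  - intros c Hc; auto_derive; [apply ex_derive_nbessel, Hm|].
    rewrite Derive_nbessel by exact Hm; field; lra.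
  - intros c Hc; apply Rmult_lt_0_compat; [apply Rdiv_lt_0_compat; lra | apply Hpos; lra].
Qed.

Lemma nbessel_lt_succ m x : -1 < m -> x <> 0 -> 0 < nbessel (m + 2) x ->
  nbessel m x < nbessel (m + 1) x.
Proof.
  intros Hm Hx Hpos; rewrite (nbessel_recurrence m x Hm).
  assert (0 < x ^ 2) by (simpl; nra).
  assert (0 < x ^ 2 / (4 * (m + 1) * (m + 2)) * nbessel (m + 2) x); [|lra].
  apply Rmult_lt_0_compat; [apply Rdiv_lt_0_compat; nra | exact Hpos].
Qed.

Lemma nbessel_pos_from_0 m z : -1 < m ->
  (forall x, 0 < x < z -> 0 < nbessel m x) -> forall x, 0 <= x < z -> 0 < nbessel m x.
Proof.
  intros Hm Hpos x Hx; destruct (Req_dec x 0) as [->|Hx0];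
    [rewrite nbessel_0 by exact Hm; lra | apply Hpos; lra].
Qed.

Lemma is_derive_nbessel_turan m x : -1 < m ->
  is_derive (fun t => nbessel (m + 1) t ^ 2 - nbessel m t * nbessel (m + 2) t) x
    (x * (nbessel (m + 1) x * nbessel (m + 2) x * (1 / (2 * (m + 1)) - 1 / (m + 2))
          + nbessel m x * nbessel (m + 3) x / (2 * (m + 3)))).
Proof.
  intros Hm; auto_derive; [repeat split; apply ex_derive_nbessel; lra|].
  rewrite !Derive_nbessel by lra.
  replace (m + 1 + 1) with (m + 2) by ring; replace (m + 2 + 1) with (m + 3) by ring.
  field; lra.
Qed.

Lemma mixture_gt_1_iff a b s : 0 < a -> 0 < b < 1 ->
  (1 - s) * a + s * (a / b) > 1 <-> b * (1 - a) / (a * (1 - b)) < s.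
Proof.
  intros Ha Hb; rewrite Rlt_div_l by nra.
  assert (E : ((1 - s) * a + s * (a / b)) * b = s * (a * (1 - b)) - b * (1 - a) + b)
    by (field; lra).
  split; intro H.
  - apply (Rmult_lt_compat_r b) in H; lra.
  - apply (Rmult_lt_reg_r b); lra.
Qed.

Lemma mixture_lt_1_iff a b s : 0 < a -> 0 < b < 1 ->
  1 > (1 - s) * a + s * (a / b) <-> s < b * (1 - a) / (a * (1 - b)).
Proof.
  intros Ha Hb; rewrite <- Rlt_div_r by nra.
  assert (E : ((1 - s) * a + s * (a / b)) * b = s * (a * (1 - b)) - b * (1 - a) + b)
    by (field; lra).
  split; intro H.
  - apply (Rmult_lt_compat_r b) in H; lra.
  - apply (Rmult_lt_reg_r b); lra.
Qed.

Definition bessel_ratio (nu x : R) : R :=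
  nbessel nu x * (1 - nbessel (nu + 1) x) / (nbessel (nu + 1) x * (1 - nbessel nu x)).

Section FirstZero.

Variables nu j : R.
Hypothesis nu_gt : -1 < nu.
Hypothesis j_pos : 0 < j.
Hypothesis nbessel_pos : forall x, 0 < x < j -> 0 < nbessel nu x.

Lemma nbessel1_pos x : 0 < x <= j -> 0 < nbessel (nu + 1) x.
Proof. exact (nbessel_succ_pos nu j nu_gt nbessel_pos x). Qed.

Lemma nbessel2_pos x : 0 < x <= j -> 0 < nbessel (nu + 2) x.
Proof.
  replace (nu + 2) with (nu + 1 + 1) by ring.
  apply (nbessel_succ_pos (nu + 1) j); [lra|]; intros y Hy; apply nbessel1_pos; lra.
Qed.

Lemma nbessel3_pos x : 0 < x <= j -> 0 < nbessel (nu + 3) x.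
Proof.
  replace (nu + 3) with (nu + 2 + 1) by ring.
  apply (nbessel_succ_pos (nu + 2) j); [lra|]; intros y Hy; apply nbessel2_pos; lra.
Qed.

Lemma nbessel0_lt_1 x : 0 < x < j -> nbessel nu x < 1.
Proof.
  intros Hx; apply (nbessel_lt_1 nu j); [exact nu_gt | | lra].
  intros y Hy; apply nbessel1_pos; lra.
Qed.

Lemma nbessel1_lt_1 x : 0 < x < j -> nbessel (nu + 1) x < 1.
Proof.
  intros Hx; apply (nbessel_lt_1 (nu + 1) j); [lra | | lra].
  intros y Hy; replace (nu + 1 + 1) with (nu + 2) by ring; apply nbessel2_pos; lra.
Qed.

(* The sign of [1/(2(nu+1)) - 1/(nu+2)] is where [nu <= 0] enters. *)
Lemma nbessel_turan x : nu <= 0 -> 0 < x < j ->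
  nbessel nu x * nbessel (nu + 2) x <= nbessel (nu + 1) x ^ 2.
Proof.
  intros Hnu Hx.
  assert (Hcoef : 0 <= 1 / (2 * (nu + 1)) - 1 / (nu + 2)).
  { replace (1 / (2 * (nu + 1)) - 1 / (nu + 2)) with (- nu / (2 * (nu + 1) * (nu + 2)))
      by (field; lra).
    apply Rdiv_le_0_compat; nra. }
  enough (nbessel (nu + 1) 0 ^ 2 - nbessel nu 0 * nbessel (nu + 2) 0
          <= nbessel (nu + 1) x ^ 2 - nbessel nu x * nbessel (nu + 2) x)
    by (rewrite !nbessel_0 in H by lra; lra).
  eapply (nondecreasing_of_derive_nonneg
    (fun t => nbessel (nu + 1) t ^ 2 - nbessel nu t * nbessel (nu + 2) t) _ 0 x);
    [lra | intros c _; apply is_derive_nbessel_turan, nu_gt |].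
  intros c Hc.
  pose proof (nbessel_pos c ltac:(lra)); pose proof (nbessel1_pos c ltac:(lra)).
  pose proof (nbessel2_pos c ltac:(lra)); pose proof (nbessel3_pos c ltac:(lra)).
  apply Rmult_le_pos; [lra|]; apply Rplus_le_le_0_compat.
  - apply Rmult_le_pos; [nra | exact Hcoef].
  - apply Rdiv_le_0_compat; nra.
Qed.

Lemma bessel_ratio_pos x : 0 < x < j -> 0 < bessel_ratio nu x.
Proof.
  intros Hx; unfold bessel_ratio.
  pose proof (nbessel_pos x Hx); pose proof (nbessel1_pos x ltac:(lra)).
  pose proof (nbessel0_lt_1 x Hx); pose proof (nbessel1_lt_1 x Hx).
  apply Rdiv_lt_0_compat; nra.
Qed.

Lemma bessel_ratio_lt x : nu <= 0 -> 0 < x < j -> bessel_ratio nu x < (nu + 1) / (nu + 2).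
Proof.
  intros Hnu Hx; set (r := (nu + 1) / (nu + 2)).
  assert (Hgrowth : r * (/ nbessel nu 0 - 1) - (/ nbessel (nu + 1) 0 - 1)
                    < r * (/ nbessel nu x - 1) - (/ nbessel (nu + 1) x - 1)).
  { apply (increasing_of_derive_pos (fun t => r * (/ nbessel nu t - 1) - (/ nbessel (nu + 1) t - 1))
      (fun c => c / (2 * (nu + 2)) * (nbessel (nu + 1) c / nbessel nu c ^ 2
                                      - nbessel (nu + 2) c / nbessel (nu + 1) c ^ 2))); [lra| |].
    - intros c Hc.
      pose proof (nbessel_pos_from_0 nu j nu_gt nbessel_pos c ltac:(lra)).
      pose proof (nbessel_pos_from_0 (nu + 1) j ltac:(lra) (fun y Hy => nbessel1_pos y ltac:(lra))
                    c ltac:(lra)).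
      auto_derive; [repeat split; try apply ex_derive_nbessel; lra|].
      rewrite !Derive_nbessel by lra; replace (nu + 1 + 1) with (nu + 2) by ring.
      unfold r; field; repeat split; lra.
    - intros c Hc.
      pose proof (nbessel_pos c ltac:(lra)); pose proof (nbessel1_pos c ltac:(lra)).
      pose proof (nbessel2_pos c ltac:(lra)); pose proof (nbessel_turan c Hnu ltac:(lra)).
      pose proof (nbessel_lt_succ nu c nu_gt ltac:(lra) ltac:(assumption)).
      set (b := nbessel nu c) in *; set (a := nbessel (nu + 1) c) in *;
        set (e := nbessel (nu + 2) c) in *.
      assert (Hcube : e * b ^ 2 < a ^ 3).
      { assert (a * (b * e) <= a * a ^ 2) by (apply Rmult_le_compat_l; lra).
        assert (b * (b * e) < a * (b * e)) by (apply Rmult_lt_compat_r; nra).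
        simpl in *; nra. }
      apply Rmult_lt_0_compat; [apply Rdiv_lt_0_compat; lra|].
      replace (a / b ^ 2 - e / a ^ 2) with ((a ^ 3 - e * b ^ 2) / (a ^ 2 * b ^ 2)) by (field; lra).
      apply Rdiv_lt_0_compat; [lra | apply Rmult_lt_0_compat; apply pow_lt; lra]. }
  rewrite !nbessel_0 in Hgrowth by lra.
  pose proof (nbessel_pos x Hx); pose proof (nbessel1_pos x ltac:(lra)).
  pose proof (nbessel0_lt_1 x Hx); pose proof (nbessel1_lt_1 x Hx).
  unfold bessel_ratio; rewrite Rlt_div_l by nra.
  set (b := nbessel nu x) in *; set (a := nbessel (nu + 1) x) in *.
  replace (r * (/ b - 1) - (/ a - 1)) with ((r * (a * (1 - b)) - b * (1 - a)) / (a * b))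
    in Hgrowth by (field; lra).
  assert (0 < r * (a * (1 - b)) - b * (1 - a)); [|lra].
  apply (Rmult_lt_reg_r (/ (a * b))); [apply Rinv_0_lt_compat; nra | lra].
Qed.

Lemma one_sub_nbessel_ratio_near_0 k : 0 < k < (nu + 1) / (nu + 2) ->
  exists d, 0 < d /\ forall x, 0 < x < d -> x < j ->
    k * (1 - nbessel nu x) < 1 - nbessel (nu + 1) x.
Proof.
  intros Hk.
  assert (Hkr : k * (nu + 2) / (nu + 1) < 1).
  { destruct Hk as [_ Hk]; rewrite <- Rlt_div_r in Hk by lra.
    rewrite Rlt_div_l by lra; lra. }
  destruct (continuity_pt_gt_near (nbessel (nu + 2)) 0 (k * (nu + 2) / (nu + 1)))
    as [d [Hd Hnear]]; [apply continuity_pt_nbessel; lra | rewrite nbessel_0; lra |].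
  exists d; split; [exact Hd|]; intros x Hx Hxj.
  enough (1 - nbessel (nu + 1) 0 - k * (1 - nbessel nu 0)
          < 1 - nbessel (nu + 1) x - k * (1 - nbessel nu x))
    by (rewrite !nbessel_0 in H by lra; lra).
  apply (increasing_of_derive_pos (fun t => 1 - nbessel (nu + 1) t - k * (1 - nbessel nu t))
    (fun c => c / 2 * (nbessel (nu + 2) c / (nu + 2) - k * nbessel (nu + 1) c / (nu + 1))));
    [lra | |].
  - intros c _; auto_derive; [repeat split; apply ex_derive_nbessel; lra|].
    rewrite !Derive_nbessel by lra; replace (nu + 1 + 1) with (nu + 2) by ring; field; lra.
  - intros c Hc.
    assert (HC : k * (nu + 2) / (nu + 1) < nbessel (nu + 2) c)
      by (apply Hnear; rewrite Rminus_0_r, Rabs_pos_eq; lra).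
    rewrite Rlt_div_l in HC by lra.
    pose proof (nbessel1_pos c ltac:(lra)); pose proof (nbessel1_lt_1 c ltac:(lra)).
    apply Rmult_lt_0_compat; [lra|].
    replace (nbessel (nu + 2) c / (nu + 2) - k * nbessel (nu + 1) c / (nu + 1))
      with ((nbessel (nu + 2) c * (nu + 1) - k * (nu + 2) * nbessel (nu + 1) c)
            / ((nu + 1) * (nu + 2))) by (field; lra).
    apply Rdiv_lt_0_compat; [|nra].
    assert (k * (nu + 2) * nbessel (nu + 1) c < k * (nu + 2)); [|lra].
    rewrite <- (Rmult_1_r (k * (nu + 2))) at 2; apply Rmult_lt_compat_l; nra.
Qed.

Lemma bessel_ratio_near_0 s : s < (nu + 1) / (nu + 2) ->
  exists x, 0 < x < j /\ s < bessel_ratio nu x.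
Proof.
  intros Hs; destruct (Rle_lt_dec s 0) as [Hs0|Hs0].
  { exists (j / 2); split; [lra|]; pose proof (bessel_ratio_pos (j / 2) ltac:(lra)); lra. }
  set (k := (s + (nu + 1) / (nu + 2)) / 2).
  destruct (one_sub_nbessel_ratio_near_0 k) as [d1 [Hd1 Hgap]]; [unfold k; lra|].
  destruct (continuity_pt_gt_near (nbessel nu) 0 (s / k)) as [d2 [Hd2 Hnear]];
    [apply continuity_pt_nbessel, nu_gt | rewrite nbessel_0, Rlt_div_l by (unfold k; lra);
                                            unfold k; lra |].
  set (x := Rmin (Rmin d1 d2) j / 2).
  assert (Hx : 0 < x < j /\ x < d1 /\ x < d2).
  { unfold x; pose proof (Rmin_l (Rmin d1 d2) j); pose proof (Rmin_r (Rmin d1 d2) j).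
    pose proof (Rmin_l d1 d2); pose proof (Rmin_r d1 d2).
    pose proof (Rmin_glb_lt _ _ _ (Rmin_glb_lt _ _ _ Hd1 Hd2) j_pos); lra. }
  destruct Hx as [Hx [Hxd1 Hxd2]].
  exists x; split; [exact Hx|].
  assert (Hsk : s < k * nbessel nu x).
  { assert (Hb : s / k < nbessel nu x) by (apply Hnear; rewrite Rminus_0_r, Rabs_pos_eq; lra).
    rewrite Rlt_div_l in Hb by (unfold k; lra); lra. }
  specialize (Hgap x (conj (proj1 Hx) Hxd1) (proj2 Hx)).
  pose proof (nbessel_pos x Hx); pose proof (nbessel1_pos x ltac:(lra)).
  pose proof (nbessel0_lt_1 x Hx); pose proof (nbessel1_lt_1 x Hx).
  unfold bessel_ratio; rewrite <- Rlt_div_r by nra.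
  set (b := nbessel nu x) in *; set (a := nbessel (nu + 1) x) in *.
  assert (s * (a * (1 - b)) < s * (1 - b)) by (apply Rmult_lt_compat_l; nra).
  assert (s * (1 - b) < k * b * (1 - b)) by (apply Rmult_lt_compat_r; lra).
  assert (b * (k * (1 - b)) < b * (1 - a)) by (apply Rmult_lt_compat_l; lra).
  lra.
Qed.

Lemma bessel_ratio_near_first_zero s : nbessel nu j = 0 -> 0 < s ->
  exists x, 0 < x < j /\ bessel_ratio nu x < s.
Proof.
  intros Hjz Hs.
  pose proof (nbessel1_pos j ltac:(lra)).
  assert (Hcont : continuity_pt (bessel_ratio nu) j).
  { apply (continuity_pt_div (fun x => nbessel nu x * (1 - nbessel (nu + 1) x))
                             (fun x => nbessel (nu + 1) x * (1 - nbessel nu x))).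
    - apply continuity_pt_mult; [apply continuity_pt_nbessel; lra|].
      apply continuity_pt_minus;
        [apply continuity_pt_const; now intros ? ? | apply continuity_pt_nbessel; lra].
    - apply continuity_pt_mult; [apply continuity_pt_nbessel; lra|].
      apply continuity_pt_minus;
        [apply continuity_pt_const; now intros ? ? | apply continuity_pt_nbessel; lra].
    - rewrite Hjz, Rminus_0_r, Rmult_1_r; lra. }
  destruct (continuity_pt_lt_near _ j s Hcont) as [d [Hd Hnear]].
  { unfold bessel_ratio; rewrite Hjz; unfold Rdiv; rewrite !Rmult_0_l; exact Hs. }
  exists (j - Rmin d j / 2).
  pose proof (Rmin_l d j); pose proof (Rmin_r d j); pose proof (Rmin_glb_lt _ _ _ Hd j_pos).
  split; [lra|]; apply Hnear; rewrite Rabs_left; lra.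
Qed.

End FirstZero.

Theorem theorem3p2 (nu p q j : R) :
  -1 < nu <= 0 ->
  0 < j -> nbessel nu j = 0 ->
  (forall x, 0 < x < j -> nbessel nu x <> 0) ->
  ((forall x, 0 < x < j ->
      (1 - p) * nbessel (nu + 1) x + p * (nbessel (nu + 1) x / nbessel nu x) > 1 /\
      1 > (1 - q) * nbessel (nu + 1) x + q * (nbessel (nu + 1) x / nbessel nu x))
   <-> (p >= (nu + 1) / (nu + 2) /\ q <= 0)).
Proof.
  intros [Hnu Hnu0] Hj Hjz Hneq.
  pose proof (nbessel_pos_of_neq0 nu j Hnu Hneq) as Hpos.
  assert (Hmix : forall s x, 0 < x < j ->
    ((1 - s) * nbessel (nu + 1) x + s * (nbessel (nu + 1) x / nbessel nu x) > 1
       <-> bessel_ratio nu x < s) /\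
    (1 > (1 - s) * nbessel (nu + 1) x + s * (nbessel (nu + 1) x / nbessel nu x)
       <-> s < bessel_ratio nu x)).
  { intros s x Hx.
    pose proof (nbessel1_pos nu j Hnu Hpos x ltac:(lra)).
    pose proof (Hpos x Hx); pose proof (nbessel0_lt_1 nu j Hnu Hpos x Hx).
    split; [apply mixture_gt_1_iff | apply mixture_lt_1_iff]; lra. }
  split.
  - intros Hineq; split.
    + apply Rnot_lt_ge; intros Hp.
      destruct (bessel_ratio_near_0 nu j Hnu Hj Hpos p Hp) as [x [Hx Hpx]].
      pose proof (proj1 (proj1 (Hmix p x Hx)) (proj1 (Hineq x Hx))); lra.
    + apply Rnot_lt_le; intros Hq.
      destruct (bessel_ratio_near_first_zero nu j Hnu Hj Hpos q Hjz Hq) as [x [Hx Hqx]].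
      pose proof (proj1 (proj2 (Hmix q x Hx)) (proj2 (Hineq x Hx))); lra.
  - intros [Hp Hq] x Hx; split; apply Hmix; [exact Hx| |exact Hx|].
    + pose proof (bessel_ratio_lt nu j Hnu Hpos x Hnu0 Hx); lra.
    + pose proof (bessel_ratio_pos nu j Hnu Hpos x Hx); lra.
Qed.
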